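(* Consider the following model of a single group $s\in\{0,1\}$. Let $f_{q,s},f_{u,s}$ be probability densities on $\mathbb{R}$ with distribution functions $F_{q,s},F_{u,s}$, satisfying the monotone likelihood ratio property: $f_{q,s}(\theta)/f_{u,s}(\theta)$ is strictly increasing in $\theta$. Let $v_q>0$, $v_u>0$, $\omega>0$, $r=v_q/v_u$, $\underline{c}<\bar{c}$, and put $\phi_s(\theta)=f_{u,s}(\theta)/f_{q,s}(\theta)$, $\tilde c_s(\theta)=\omega\,[F_{u,s}(\theta)-F_{q,s}(\theta)]$, $G(c)=\min\!\left(1,\frac{c-\underline{c}}{\bar c-\underline{c}}\right)$. Call a pair $(\tilde\theta_s,\pi_s)$ an equilibrium for group $s$ if $$\pi_s=\frac{\phi_s(\tilde\theta_s)}{r+\phi_s(\tilde\theta_s)}\quad\text{and}\quad \pi_s=G(\tilde c_s(\tilde\theta_s)).$$ Define the firm's welfare $\mathrm{FW}_s(\theta,\pi)=\pi(1-F_{q,s}(\theta))v_q-(1-\pi)(1-F_{u,s}(\theta))v_u$, the applicants' welfare $$\mathrm{AW}_s(\theta,\pi)=\omega\Bigl(\pi(1-F_{q,s}(\theta))+(1-\pi)(1-F_{u,s}(\theta))\Bigr)+\int_{\underline{c}}^{(1-\pi)\underline{c}+\pi\bar c}c\,\mathrm{d}c,$$ and the social welfare $\mathrm{SW}_s(\theta,\pi)=\mathrm{FW}_s(\theta,\pi)+\mathrm{AW}_s(\theta,\pi)$. Suppose $(\tilde\theta_s^{(1)},\pi_s^{(1)})$ and $(\tilde\theta_s^{(2)},\pi_s^{(2)})$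 are two equilibria for group $s$ with $\pi_s^{(1)}>\pi_s^{(2)}$, and let $\mathrm{SW}_s^{(i)}=\mathrm{SW}_s(\tilde\theta_s^{(i)},\pi_s^{(i)})$. Then $\mathrm{SW}_s^{(1)}>\mathrm{SW}_s^{(2)}$.
   Context: Game-theoretic model: applicants of group $s$ each draw a cost $c$ uniformly on $[\underline c,\bar c]$ and choose effort $e\in\{q,u\}$ (qualified/unqualified); a classifier score $\theta$ has density $f_{e,s}$ given $e,s$; the firm accepts applicants with $\theta>\tilde\theta_s$, earning $v_q$ per accepted qualified and losing $v_u$ per accepted unqualified applicant; accepted applicants receive $\omega$. $\pi_s$ is the fraction of qualified applicants in group $s$. The first equilibrium equation is the firm's optimal threshold condition (accept iff $\mathbb{P}(e=q\mid\theta,s)v_q-(1-\mathbb{P}(e=q\mid\theta,s))v_u\ge 0$), the second is the applicants' best response (invest iff $c<\tilde c_s(\tilde\theta_s)$). *)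

From mathcomp Require Import all_boot all_order all_algebra.
From mathcomp Require Import all_classical all_reals all_analysis.
Set Implicit Arguments. Unset Strict Implicit. Unset Printing Implicit Defensive.
Import Order.TTheory GRing.Theory Num.Theory.
Local Open Scope classical_set_scope.
Local Open Scope ring_scope.

Definition is_density (R : realType) (f : R -> R) : Prop :=
  [/\ forall x, 0 <= f x,
      measurable_fun setT f
    & (\int[@lebesgue_measure R]_x (f x)%:E = 1)%E].

Definition is_cdf_of (R : realType) (f F : R -> R) : Prop :=
  forall t, ((F t)%:E = \int[@lebesgue_measure R]_(x in `]-oo, t]) (f x)%:E)%E.

Definition oint (R : realType) (a b : R) (g : R -> R) : R :=
  if a <= b then Rintegral (@lebesgue_measure R) `[a, b] g
  else - Rintegral (@lebesgue_measure R) `[b, a] g.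

Section Model.
Variables (R : realType) (fq fu Fq Fu : R -> R) (vq vu om clo chi : R).

Definition phi (t : R) : R := fu t / fq t.
Definition ctil (t : R) : R := om * (Fu t - Fq t).
Definition Gc (c : R) : R := Num.min 1 ((c - clo) / (chi - clo)).

Definition is_equilibrium (t p : R) : Prop :=
  p = phi t / (vq / vu + phi t) /\ p = Gc (ctil t).

Definition FW (t p : R) : R :=
  p * (1 - Fq t) * vq - (1 - p) * (1 - Fu t) * vu.
Definition AW (t p : R) : R :=
  om * (p * (1 - Fq t) + (1 - p) * (1 - Fu t))
  + oint clo ((1 - p) * clo + p * chi) id.
Definition SW (t p : R) : R := FW t p + AW t p.
End Model.

From mathcomp Require Import all_boot all_order all_algebra.
From mathcomp Require Import all_classical all_reals all_analysis.
From mathcomp Require Import lra ring measurable_realfun.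
Set Implicit Arguments. Unset Strict Implicit. Unset Printing Implicit Defensive.
Import Order.TTheory GRing.Theory Num.Theory.
Import numFieldNormedType.Exports.
Local Open Scope ring_scope.

(* At an equilibrium the firm is indifferent at its threshold, so the likelihood
   ratio fq/fu there equals the odds (1 - p) vu / (p vq).  These odds decrease
   in p, so by MLR the equilibrium with more qualified applicants has the lower
   threshold, t1 <= t2.  On ]t1, t2] MLR gives fq >= (fq/fu)(t1) fu, which
   integrates to (1 - p1) vu (Fu t2 - Fu t1) <= p1 vq (Fq t2 - Fq t1): the extra
   applicants the firm accepts at t1 are worth it, so firm welfare does not
   decrease.  Since p < 1, the upper limit of the cost integral in AW is the
   investment cutoff c = om (Fu - Fq) = clo + p (chi - clo), which is
   nonnegative because MLR implies first-order stochastic dominance.  Applicant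
   welfare then reads om (1 - Fu) + p c + (c^2 - clo^2) / 2, and every term is
   larger at the first equilibrium, the last two strictly. *)

Section CumulativeDistribution.
Local Open Scope classical_set_scope.
Variable R : realType.
Local Notation mu := (@lebesgue_measure R).

Lemma density_measurable (f : R -> R) (A : set R) :
  is_density f -> measurable_fun A (EFin \o f).
Proof.
by case=> _ mf _; apply/measurable_EFinP; exact: measurable_funS mf.
Qed.

Lemma integral_density_ge0 (f : R -> R) (A : set R) :
  is_density f -> (0 <= \int[mu]_(x in A) (f x)%:E)%E.
Proof. by case=> f0 _ _; apply: integral_ge0 => x _; rewrite lee_fin. Qed.

Lemma cdfB_integral (f F : R -> R) (a b : R) :
  is_density f -> is_cdf_of f F -> a <= b ->
  ((F b - F a)%:E = \int[mu]_(x in `]a, b]) (f x)%:E)%E.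
Proof.
move=> df cF ab; rewrite EFinB !cF.
rewrite (@itv_bndbnd_setU _ _ -oo%O (BRight a) (BRight b)) //.
rewrite ge0_integral_setU //.
- by rewrite -(cF a) addeAC subee // add0e.
- exact: density_measurable.
- by case: df => f0 _ _ x _; rewrite lee_fin.
- rewrite disj_set2E; apply/eqP/seteqP; split => x //=.
  by rewrite !in_itv /= => -[] xa /andP[ax _]; lra.
Qed.

Lemma cdf_tail_integral (f F : R -> R) (t : R) :
  is_density f -> is_cdf_of f F ->
  ((1 - F t)%:E = \int[mu]_(x in `]t, +oo[) (f x)%:E)%E.
Proof.
move=> df cF; rewrite EFinB; case: (df) => f0 _ <-.
have -> : (\int[mu]_x (f x)%:E =
    \int[mu]_(x in `]-oo, t] `|` `]t, +oo[) (f x)%:E)%E.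
  by rewrite (@itv_setU_setT _ _ false t).
rewrite ge0_integral_setU //.
- by rewrite -(cF t) addeAC subee // add0e.
- exact: density_measurable.
- by move=> x _; rewrite lee_fin.
- rewrite disj_set2E; apply/eqP/seteqP; split => x //=.
  by rewrite !in_itv /= => -[] xt /andP[tx _]; lra.
Qed.

Lemma cdf_nondecreasing (f F : R -> R) (a b : R) :
  is_density f -> is_cdf_of f F -> a <= b -> F a <= F b.
Proof.
move=> df cF ab; rewrite -subr_ge0 -lee_fin (cdfB_integral df cF ab).
exact: integral_density_ge0.
Qed.

Lemma cdf_le1 (f F : R -> R) (t : R) :
  is_density f -> is_cdf_of f F -> F t <= 1.
Proof.
move=> df cF; rewrite -subr_ge0 -lee_fin (cdf_tail_integral t df cF).
exact: integral_density_ge0.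
Qed.

Lemma ge0_le_integral_scaled (f g : R -> R) (D : set R) (k : R) :
  measurable D -> measurable_fun D (EFin \o f) -> measurable_fun D (EFin \o g) ->
  (forall x, D x -> 0 <= f x) -> 0 <= k -> (forall x, D x -> k * f x <= g x) ->
  (k%:E * \int[mu]_(x in D) (f x)%:E <= \int[mu]_(x in D) (g x)%:E)%E.
Proof.
move=> mD mf mg f0 k0 kfg.
rewrite -ge0_integralZl //.
apply: ge0_le_integral => //.
- by move=> x Dx; rewrite -EFinM lee_fin mulr_ge0 ?f0.
- exact: measurable_funeM.
Qed.

End CumulativeDistribution.

Section MonotoneLikelihoodRatio.
Local Open Scope classical_set_scope.
Variables (R : realType) (fq fu Fq Fu : R -> R).
Hypotheses (dq : is_density fq) (du : is_density fu).
Hypotheses (cq : is_cdf_of fq Fq) (cu : is_cdf_of fu Fu).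
Hypotheses (fq_gt0 : forall x, 0 < fq x) (fu_gt0 : forall x, 0 < fu x).
Hypothesis mlr : forall x y, x < y -> fq x / fu x < fq y / fu y.

Lemma mlr_cdfB t1 t2 :
  t1 <= t2 -> fq t1 / fu t1 * (Fu t2 - Fu t1) <= Fq t2 - Fq t1.
Proof.
move=> t12; rewrite -lee_fin EFinM (cdfB_integral du cu t12).
rewrite (cdfB_integral dq cq t12).
apply: ge0_le_integral_scaled => //; try exact: density_measurable.
- by move=> x _; exact/ltW.
- by rewrite divr_ge0 ?ltW.
- move=> x /=; rewrite in_itv /= => /andP[t1x _].
  by rewrite -ler_pdivlMr //; exact/ltW/mlr.
Qed.

Lemma mlr_cdf_le t : Fq t <= Fu t.
Proof.
have ratio_le : {homo (fun x => fq x / fu x) : x y / x <= y}.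
  exact: ltW_homo mlr.
case: (leP (fq t / fu t) 1) => [le1|gt1].
- rewrite -lee_fin cq cu -[X in (X <= _)%E]mul1e.
  apply: ge0_le_integral_scaled => //; try exact: density_measurable.
  + by move=> x _; exact/ltW.
  + move=> x /=; rewrite in_itv /= => xt.
    by rewrite mul1r -[fu x]mul1r -ler_pdivrMr // (le_trans (ratio_le _ _ xt)).
- rewrite -lerN2 -(lerD2l 1) -lee_fin (cdf_tail_integral t dq cq).
  rewrite (cdf_tail_integral t du cu) -[X in (X <= _)%E]mul1e.
  apply: ge0_le_integral_scaled => //; try exact: density_measurable.
  + by move=> x _; exact/ltW.
  + move=> x /=; rewrite in_itv /= andbT => tx.
    by rewrite mul1r -[fu x]mul1r -ler_pdivlMr // ltW // (lt_trans gt1 (mlr tx)).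
Qed.

End MonotoneLikelihoodRatio.

Lemma belief_odds (R : realFieldType) (vq vu q u p : R) :
  0 < vq -> 0 < vu -> 0 < q -> 0 < u -> p = u / q / (vq / vu + u / q) ->
  [/\ 0 < p, p < 1 & q / u = (1 - p) * vu / (p * vq)].
Proof.
move=> vq_gt0 vu_gt0 q_gt0 u_gt0 ->.
have ratio_gt0 : 0 < u / q by rewrite divr_gt0.
have den_gt0 : 0 < vq / vu + u / q by rewrite addr_gt0 ?divr_gt0.
split; first by rewrite divr_gt0.
- by rewrite ltr_pdivrMr // mul1r ltrDr divr_gt0.
- by field; rewrite !gt_eqF ?addr_gt0 ?mulr_gt0.
Qed.

Lemma odds_decreasing (R : realFieldType) (vq vu p1 p2 : R) :
  0 < vq -> 0 < vu -> 0 < p2 -> p2 < p1 ->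
  (1 - p1) * vu / (p1 * vq) < (1 - p2) * vu / (p2 * vq).
Proof.
move=> vq_gt0 vu_gt0 p2_gt0 p21.
have odds p : 0 < p -> (1 - p) * vu / (p * vq) = (p^-1 - 1) * (vu / vq).
  by move=> p_gt0; field; rewrite !gt_eqF.
have p1_gt0 := lt_trans p2_gt0 p21.
rewrite !odds // ltr_pM2r ?divr_gt0 // ltrD2r.
by rewrite ltf_pV2 ?posrE.
Qed.

Lemma Gc_lt1_inv (R : realType) (clo chi c p : R) :
  clo < chi -> p < 1 -> p = Gc clo chi c -> (1 - p) * clo + p * chi = c.
Proof.
rewrite /Gc => clo_lt_chi p_lt1; case: leP => [_ p1|_ ->].
  by rewrite p1 ltxx in p_lt1.
by field; rewrite subr_eq0 gt_eqF.
Qed.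

Lemma oint_id (R : realType) (a b : R) :
  a < b -> oint a b id = (b ^+ 2 - a ^+ 2) / 2.
Proof.
move=> ab; rewrite /oint ltW // /Rintegral.
have sq_cont : continuous (fun x : R => x ^+ 2 / 2).
  by move=> x; apply: cvgM; [exact: exprn_continuous | exact: cvg_cst].
rewrite (@continuous_FTC2 _ _ (fun x : R => x ^+ 2 / 2)) //=.
- by rewrite mulrBl.
- by apply: continuous_subspaceT => x; exact: cvg_id.
- split.
  + by move=> x _; apply: derivableM => //; exact: exprn_derivable.
  + exact: cvg_at_right_filter (sq_cont a).
  + exact: cvg_at_left_filter (sq_cont b).
- move=> x _; rewrite derive1E.
  have sq_derive : is_derive x 1 (fun y : R => y ^+ 2 / 2) x.
    apply: is_derive_eq.
    rewrite !scaler0 add0r -scalerDl scalerA.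
    have -> : 2^-1 * (x + x) = x by field.
    exact: mulr1.
  exact: derive_val.
Qed.

Section Welfare.
Variables (R : realType) (Fq Fu : R -> R) (vq vu om clo chi : R).
Hypotheses (vq_gt0 : 0 < vq) (vu_gt0 : 0 < vu) (om_gt0 : 0 < om).
Hypothesis clo_lt_chi : clo < chi.

Lemma FW_le t1 p1 t2 p2 : 0 < p1 -> p2 <= p1 -> Fq t2 <= 1 -> Fu t2 <= 1 ->
  (1 - p1) * vu / (p1 * vq) * (Fu t2 - Fu t1) <= Fq t2 - Fq t1 ->
  FW Fq Fu vq vu t2 p2 <= FW Fq Fu vq vu t1 p1.
Proof.
move=> p1_gt0 p21 Fq2_le1 Fu2_le1.
rewrite mulrAC ler_pdivrMr ?mulr_gt0 // => increment.
rewrite -subr_ge0.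
have -> : FW Fq Fu vq vu t1 p1 - FW Fq Fu vq vu t2 p2 =
    ((Fq t2 - Fq t1) * (p1 * vq) - (1 - p1) * vu * (Fu t2 - Fu t1))
    + (p1 - p2) * ((1 - Fq t2) * vq + (1 - Fu t2) * vu).
  by rewrite /FW; ring.
apply: addr_ge0; first by rewrite subr_ge0.
apply: mulr_ge0; first by rewrite subr_ge0.
by apply: addr_ge0; apply: mulr_ge0; rewrite ?subr_ge0 // ltW.
Qed.

Lemma AW_at_cutoff t p : 0 < p -> (1 - p) * clo + p * chi = ctil Fq Fu om t ->
  AW Fq Fu om clo chi t p =
  om * (1 - Fu t) + p * ctil Fq Fu om t + (ctil Fq Fu om t ^+ 2 - clo ^+ 2) / 2.
Proof.
move=> p_gt0 cutoff; rewrite /AW cutoff oint_id; first by rewrite /ctil; ring.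
rewrite -cutoff -subr_gt0.
have -> : (1 - p) * clo + p * chi - clo = p * (chi - clo) by ring.
by rewrite mulr_gt0 ?subr_gt0.
Qed.

Lemma AW_lt t1 p1 t2 p2 : 0 < p2 -> p2 < p1 ->
  (1 - p1) * clo + p1 * chi = ctil Fq Fu om t1 ->
  (1 - p2) * clo + p2 * chi = ctil Fq Fu om t2 ->
  Fu t1 <= Fu t2 -> 0 <= ctil Fq Fu om t2 ->
  AW Fq Fu om clo chi t2 p2 < AW Fq Fu om clo chi t1 p1.
Proof.
move=> p2_gt0 p21 cutoff1 cutoff2 Fu12 c2_ge0.
have p1_gt0 := lt_trans p2_gt0 p21.
rewrite !AW_at_cutoff //.
have c21 : ctil Fq Fu om t2 < ctil Fq Fu om t1.
  rewrite -cutoff1 -cutoff2 -subr_gt0.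
  have -> : (1 - p1) * clo + p1 * chi - ((1 - p2) * clo + p2 * chi) =
    (p1 - p2) * (chi - clo) by ring.
  by rewrite mulr_gt0 ?subr_gt0.
apply: ltr_leD; first apply: ler_ltD.
- by rewrite ler_pM2l // lerD2l lerN2.
- by apply: le_lt_trans (ler_wpM2r c2_ge0 (ltW p21)) _; rewrite ltr_pM2l.
- by rewrite ler_pM2r ?invr_gt0 // lerD2r ltW // ltrXn2r.
Qed.

End Welfare.

Theorem theorem1 (R : realType) (fq fu Fq Fu : R -> R) (vq vu om clo chi : R)
  (t1 p1 t2 p2 : R) :
  is_density fq -> is_density fu ->
  is_cdf_of fq Fq -> is_cdf_of fu Fu ->
  (forall x, 0 < fq x) -> (forall x, 0 < fu x) ->
  (forall x y, x < y -> fq x / fu x < fq y / fu y) ->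
  0 < vq -> 0 < vu -> 0 < om -> clo < chi ->
  is_equilibrium fq fu Fq Fu vq vu om clo chi t1 p1 ->
  is_equilibrium fq fu Fq Fu vq vu om clo chi t2 p2 ->
  p2 < p1 ->
  SW Fq Fu vq vu om clo chi t2 p2 < SW Fq Fu vq vu om clo chi t1 p1.
Proof.
move=> dq du cq cu fq_gt0 fu_gt0 mlr vq_gt0 vu_gt0 om_gt0 clo_lt_chi.
move=> [belief1 cutoff1] [belief2 cutoff2] p21.
have [p1_gt0 p1_lt1 ratio1] := belief_odds vq_gt0 vu_gt0 (fq_gt0 t1) (fu_gt0 t1) belief1.
have [p2_gt0 p2_lt1 ratio2] := belief_odds vq_gt0 vu_gt0 (fq_gt0 t2) (fu_gt0 t2) belief2.
have t12 : t1 <= t2.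
  rewrite leNgt; apply/negP => /mlr; rewrite ratio1 ratio2 ltNge ltW //.
  exact: odds_decreasing.
have cut1 := Gc_lt1_inv clo_lt_chi p1_lt1 cutoff1.
have cut2 := Gc_lt1_inv clo_lt_chi p2_lt1 cutoff2.
have Fq2_le_Fu2 : Fq t2 <= Fu t2 := mlr_cdf_le dq du cq cu fq_gt0 fu_gt0 mlr t2.
apply: ler_ltD.
- apply: (FW_le vq_gt0 vu_gt0 p1_gt0 (ltW p21) (cdf_le1 t2 dq cq) (cdf_le1 t2 du cu)).
  by rewrite -ratio1; exact: mlr_cdfB.
- apply: (AW_lt om_gt0 clo_lt_chi p2_gt0 p21 cut1 cut2 (cdf_nondecreasing du cu t12)).
  by rewrite /ctil mulr_ge0 ?subr_ge0 // ltW.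
Qed.
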